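(* If $k\ne\mathbb{F}_2$, there exists a $k$-linear autoequivalence $F$ of $\mathbf{Perf}(A)$ with $F\circ[1]=[1]\circ F$ such that $F$, together with the identity comparison $F\circ[1]=[1]\circ F$, is not exact (it does not send distinguished triangles to distinguished triangles). Explicitly, for any $\lambda\in k\setminus\{0,1\}$ one may take $F$ to be the identity on the objects $X_i[\alpha]$ and to act on the generators by $F(g)=\lambda^\alpha g$ for every generator $g\in\{1^i_{j[\alpha]},\epsilon^i_{j[\alpha]}\}$ of $\mathrm{Hom}(X_i,X_j[\alpha])$ (with $F$ the identity on $\mathrm{End}(X_i)$), extended additively and compatibly with shifts.
   Context: $k$ is a field, $A=k[\epsilon]/(\epsilon^2)$, $\mathbf{Perf}(A)$ the homotopy category of bounded complexes of finitely generated free $A$-modules, whose indecomposables are the $X_i[\alpha]$, $i\ge1,\alpha\in\mathbb{Z}$. $X_i$ is the complex with $A$ in degrees $-i,\dots,-1$ and differentials multiplication by $\epsilon$; $X_j[\alpha]$ is modelled as the complex with $A$ in degrees $-j-\alpha,\dots,-1-\alpha$ and differentials $\epsilon$. For $\max\{0,i-j\}\le\alpha<i$, $1^i_{j[\alpha]}$ is the class of the chain map $X_i\to X_j[\alpha]$ that is the identity in degrees where both are nonzero and $0$ elsewhere; for $-j<\alpha\le\min\{0,i-j\}$, $\epsilon^i_{j[\alpha]}$ is the class of the chain map that is multiplication by $\epsilon$ in degree $-1$ and $0$ elsewhere; these span $\mathrm{Hom}(X_i,X_j[\alpha])$ (with basis $\mathrm{id},\epsilon^i_{i[0]}$ when $i=j,\alpha=0$,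 and $\mathrm{Hom}=0$ otherwise). *)

(* A concrete model of Perf(A) = K^b(free f.g. A-modules),
   A = k[eps]/(eps^2), with its shift functor and distinguished triangles. *)
From HB Require Import structures.
From mathcomp Require Import all_boot all_order all_algebra.
Set Implicit Arguments. Unset Strict Implicit. Unset Printing Implicit Defensive.
Import Order.TTheory GRing.Theory Num.Theory.
Local Open Scope ring_scope.

Section Perf.
Variable k : fieldType.

(* An A-linear map A^n -> A^m is a matrix M0 + eps M1 with M0, M1 in 'M[k]_(m,n). *)
Definition amx (m n : nat) := ('M[k]_(m, n) * 'M[k]_(m, n))%type.
Definition amul m n p (M : amx m n) (N : amx n p) : amx m p :=
  (M.1 *m N.1, M.1 *m N.2 + M.2 *m N.1).
Definition aadd m n (M N : amx m n) : amx m n := (M.1 + N.1, M.2 + N.2).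
Definition aopp m n (M : amx m n) : amx m n := (- M.1, - M.2).
Definition ascale m n (c : k) (M : amx m n) : amx m n := (c *: M.1, c *: M.2).
Definition azero m n : amx m n := (0, 0).
Definition aid n : amx n n := (1%:M, 0).
Definition ablock m1 m2 n1 n2 (Aul : amx m1 n1) (Aur : amx m1 n2)
  (Adl : amx m2 n1) (Adr : amx m2 n2) : amx (m1 + m2) (n1 + n2) :=
  (block_mx Aul.1 Aur.1 Adl.1 Adr.1, block_mx Aul.2 Aur.2 Adl.2 Adr.2).

(* Raw cochain complexes: the term in degree n is A^(rk n),
   dif n : A^(rk n) -> A^(rk (n+1)). *)
Record cx := Cx { rk : int -> nat ; dif : forall n : int, amx (rk (n + 1)) (rk n) }.

Definition cx_ok (X : cx) : Prop :=
  (exists N : nat, forall n : int, (N < `|n|)%N -> rk X n = 0%N) /\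
  (forall n : int, amul (dif X (n + 1)) (dif X n) = azero _ _).

(* Raw degreewise maps; morphisms are chain maps modulo homotopy. *)
Definition chom (X Y : cx) := forall n : int, amx (rk Y n) (rk X n).

Definition is_chain X Y (f : chom X Y) : Prop :=
  forall n : int, amul (dif Y n) (f n) = amul (f (n + 1)) (dif X n).

Definition htpy X Y (f g : chom X Y) : Prop :=
  exists h : forall n : int, amx (rk Y n) (rk X (n + 1)),
  forall n : int,
    aadd (f (n + 1)) (aopp (g (n + 1))) =
    aadd (amul (h (n + 1)) (dif X (n + 1))) (amul (dif Y n) (h n)).

Definition hcomp X Y Z (g : chom Y Z) (f : chom X Y) : chom X Z :=
  fun n => amul (g n) (f n).
Definition hid X : chom X X := fun n => aid (rk X n).
Definition hadd X Y (f g : chom X Y) : chom X Y := fun n => aadd (f n) (g n).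
Definition hscale X Y (c : k) (f : chom X Y) : chom X Y := fun n => ascale c (f n).

Definition is_iso X Y (f : chom X Y) : Prop :=
  is_chain f /\ exists g : chom Y X, is_chain g /\
    htpy (hcomp g f) (hid X) /\ htpy (hcomp f g) (hid Y).

Definition shift (X : cx) : cx :=
  @Cx (fun n => rk X (n + 1)) (fun n => aopp (dif X (n + 1))).
Definition shiftm X Y (f : chom X Y) : chom (shift X) (shift Y) := fun n => f (n + 1).

Definition cone X Y (f : chom X Y) : cx :=
  @Cx (fun n => (rk X (n + 1) + rk Y n)%N)
     (fun n => ablock (aopp (dif X (n + 1))) (azero _ _) (f (n + 1)) (dif Y n)).
Definition cone_in X Y (f : chom X Y) : chom Y (cone f) :=
  fun n => (col_mx 0 1%:M, 0).
Definition cone_out X Y (f : chom X Y) : chom (cone f) (shift X) :=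
  fun n => (row_mx 1%:M 0, 0).

Definition dist X Y Z (u : chom X Y) (v : chom Y Z) (w : chom Z (shift X)) : Prop :=
  is_chain u /\ is_chain v /\ is_chain w /\
  exists (X' Y' : cx) (f : chom X' Y') (a : chom X X') (b : chom Y Y') (c : chom Z (cone f)),
    [/\ cx_ok X', cx_ok Y' & is_chain f] /\ [/\ is_iso a, is_iso b & is_iso c] /\
    [/\ htpy (hcomp b u) (hcomp f a),
        htpy (hcomp c v) (hcomp (cone_in f) b) &
        htpy (hcomp (shiftm a) w) (hcomp (cone_out f) c)].

Definition castm X X' Y Y' (e1 : X = X') (e2 : Y = Y') (f : chom X Y) : chom X' Y' :=
  match e1 in _ = X0, e2 in _ = Y0 return chom X0 Y0 with erefl, erefl => f end.

(* A functor on Perf(A): an object map and a map on chain-map representatives. *)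

Definition klin_autoeq (F0 : cx -> cx) (F1 : forall X Y, chom X Y -> chom (F0 X) (F0 Y)) : Prop :=
  (forall X, cx_ok X -> cx_ok (F0 X)) /\
  (forall X Y (f : chom X Y), cx_ok X -> cx_ok Y -> is_chain f -> is_chain (F1 X Y f)) /\
  (forall X Y (f g : chom X Y), cx_ok X -> cx_ok Y -> is_chain f -> is_chain g ->
     htpy f g -> htpy (F1 X Y f) (F1 X Y g)) /\
  (forall X Y Z (f : chom X Y) (g : chom Y Z), cx_ok X -> cx_ok Y -> cx_ok Z ->
     is_chain f -> is_chain g ->
     htpy (F1 X Z (hcomp g f)) (hcomp (F1 Y Z g) (F1 X Y f))) /\
  (forall X, cx_ok X -> htpy (F1 X X (hid X)) (hid (F0 X))) /\
  (forall X Y (c : k) (f g : chom X Y), cx_ok X -> cx_ok Y -> is_chain f -> is_chain g ->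
     htpy (F1 X Y (hadd (hscale c f) g)) (hadd (hscale c (F1 X Y f)) (F1 X Y g))) /\
  (forall X Y (g : chom (F0 X) (F0 Y)), cx_ok X -> cx_ok Y -> is_chain g ->
     exists f : chom X Y, is_chain f /\ htpy (F1 X Y f) g) /\
  (forall X Y (f g : chom X Y), cx_ok X -> cx_ok Y -> is_chain f -> is_chain g ->
     htpy (F1 X Y f) (F1 X Y g) -> htpy f g) /\
  (forall Y, cx_ok Y -> exists X, cx_ok X /\ exists a : chom (F0 X) Y, is_iso a).

Definition shift_comm (F0 : cx -> cx) (F1 : forall X Y, chom X Y -> chom (F0 X) (F0 Y))
  (hsh : forall X, cx_ok X -> F0 (shift X) = shift (F0 X)) : Prop :=
  forall X Y (hX : cx_ok X) (hY : cx_ok Y) (f : chom X Y), is_chain f ->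
    htpy (castm (hsh X hX) (hsh Y hY) (F1 _ _ (shiftm f))) (shiftm (F1 X Y f)).

Definition exact (F0 : cx -> cx) (F1 : forall X Y, chom X Y -> chom (F0 X) (F0 Y))
  (hsh : forall X, cx_ok X -> F0 (shift X) = shift (F0 X)) : Prop :=
  forall X Y Z (hX : cx_ok X) (hY : cx_ok Y) (hZ : cx_ok Z)
    (u : chom X Y) (v : chom Y Z) (w : chom Z (shift X)),
    dist u v w ->
    dist (F1 X Y u) (F1 Y Z v) (castm (erefl (F0 Z)) (hsh X hX) (F1 Z (shift X) w)).

(* X_j[alpha]: A in degrees -j-alpha, ..., -1-alpha, differentials eps. *)
Definition Xrk (j : nat) (a : int) (n : int) : nat :=
  if (- (j%:Z) - a <= n) && (n <= -1 - a) then 1%N else 0%N.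
(* (0, const 1) is eps on a 1x1 block and the empty matrix otherwise. *)
Definition Xobj (j : nat) (a : int) : cx :=
  @Cx (Xrk j a) (fun n => (0, const_mx 1)).

(* 1^i_{j[a]}: identity where both terms are nonzero, 0 elsewhere. *)
Definition one_gen (i j : nat) (a : int) : chom (Xobj i 0) (Xobj j a) :=
  fun n => (const_mx 1, 0).
Definition eps_gen (i j : nat) (a : int) : chom (Xobj i 0) (Xobj j a) :=
  fun n => if n == -1 then (0, const_mx 1) else (0, 0).

Definition lambda_spec (l : k) (F0 : cx -> cx)
  (F1 : forall X Y, chom X Y -> chom (F0 X) (F0 Y)) : Prop :=
  exists hfix : forall (i : nat) (a : int), (0 < i)%N -> F0 (Xobj i a) = Xobj i a,
  (forall (i j : nat) (a : int) (hi : (0 < i)%N) (hj : (0 < j)%N),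
     Num.max 0 (i%:Z - j%:Z) <= a -> a < i%:Z ->
     htpy (castm (hfix i 0 hi) (hfix j a hj) (F1 _ _ (one_gen i j a)))
          (hscale (l ^ a) (one_gen i j a))) /\
  (forall (i j : nat) (a : int) (hi : (0 < i)%N) (hj : (0 < j)%N),
     - (j%:Z) < a -> a <= Num.min 0 (i%:Z - j%:Z) ->
     htpy (castm (hfix i 0 hi) (hfix j a hj) (F1 _ _ (eps_gen i j a)))
          (hscale (l ^ a) (eps_gen i j a))) /\
  (forall (i : nat) (hi : (0 < i)%N) (f : chom (Xobj i 0) (Xobj i 0)), is_chain f ->
     htpy (castm (hfix i 0 hi) (hfix i 0 hi) (F1 _ _ f)) f).

End Perf.

(* Every nonzero perfect complex X has a top degree n, and we call
   -n-1 its shift index, so that X_j[alpha] has index alpha and X[1] has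
   index one more than X.  The functor F is the identity on objects and
   multiplies a map X -> Y by lambda^(index Y - index X).  Since these factors
   are nonzero and multiplicative, F is a k-linear autoequivalence; since the
   index rises by one under [1], F commutes with [1] on the nose.

   F is not exact: on the standard triangle X_1 -eps-> X_1 -> C(eps) -> X_1[1]
   it only rescales the last map by lambda.  Any distinguished triangle on eps
   receives a comparison map g from the standard one; reducing modulo eps
   (the complexes involved are minimal, so homotopic maps agree mod eps), g is
   1 in degree -1 and lambda^-1 in degree -2, which the chain condition
   through the eps-component of the differential of C(eps) forbids. *)
From HB Require Import structures.
From mathcomp Require Import all_boot all_order all_algebra.
From mathcomp Require Import zify.
From Stdlib Require Import ClassicalEpsilon FunctionalExtensionality Classical.
Import Order.TTheory GRing.Theory Num.Theory.
Local Open Scope ring_scope.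
Set Implicit Arguments. Unset Strict Implicit.

Section AMatrices.
Variable k : fieldType.

Lemma amulA m n p q (M : amx k m n) (N : amx k n p) (P : amx k p q) :
  amul M (amul N P) = amul (amul M N) P.
Proof.
case: M N P => [M0 M1] [N0 N1] [P0 P1]; rewrite /amul /=; congr pair.
  by rewrite mulmxA.
by rewrite !mulmxDr !mulmxDl !mulmxA addrA.
Qed.

Lemma amulDl m n p (M N : amx k m n) (P : amx k n p) :
  amul (M + N) P = amul M P + amul N P.
Proof.
case: M N P => [M0 M1] [N0 N1] [P0 P1]; rewrite /amul /=.
by congr pair; rewrite !mulmxDl // addrACA.
Qed.

Lemma amulDr m n p (M : amx k m n) (N P : amx k n p) :
  amul M (N + P) = amul M N + amul M P.
Proof.
case: M N P => [M0 M1] [N0 N1] [P0 P1]; rewrite /amul /=.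
by congr pair; rewrite !mulmxDr // addrACA.
Qed.

Lemma amulNl m n p (M : amx k m n) (P : amx k n p) : amul (- M) P = - amul M P.
Proof. by case: M P => [M0 M1] [P0 P1]; rewrite /amul /=; congr pair; rewrite !mulNmx ?opprD. Qed.

Lemma amulNr m n p (M : amx k m n) (P : amx k n p) : amul M (- P) = - amul M P.
Proof. by case: M P => [M0 M1] [P0 P1]; rewrite /amul /=; congr pair; rewrite !mulmxN ?opprD. Qed.

Lemma amulZl m n p c (M : amx k m n) (P : amx k n p) :
  amul (ascale c M) P = ascale c (amul M P).
Proof.
by case: M P => [M0 M1] [P0 P1]; rewrite /amul /ascale /= -!scalemxAl scalerDr.
Qed.

Lemma amulZr m n p c (M : amx k m n) (P : amx k n p) :
  amul M (ascale c P) = ascale c (amul M P).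
Proof.
by case: M P => [M0 M1] [P0 P1]; rewrite /amul /ascale /= -!scalemxAr scalerDr.
Qed.

Lemma amul1l m n (M : amx k m n) : amul (aid k m) M = M.
Proof. by case: M => [M0 M1]; rewrite /amul /aid /= !mul1mx mul0mx addr0. Qed.

Lemma amul1r m n (M : amx k m n) : amul M (aid k n) = M.
Proof. by case: M => [M0 M1]; rewrite /amul /aid /= !mulmx1 mulmx0 add0r. Qed.

Lemma amul0l m n p (P : amx k n p) : amul (0 : amx k m n) P = 0.
Proof. by case: P => P0 P1; rewrite /amul /= !mul0mx addr0. Qed.

Lemma amul0r m n p (P : amx k m n) : amul P (0 : amx k n p) = 0.
Proof. by case: P => P0 P1; rewrite /amul /= !mulmx0 addr0. Qed.

Lemma ascaleD m n c (M N : amx k m n) : ascale c (M + N) = ascale c M + ascale c N.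
Proof. by case: M N => [M0 M1] [N0 N1]; rewrite /ascale /= !scalerDr. Qed.

Lemma ascaleN m n c (M : amx k m n) : ascale c (- M) = - ascale c M.
Proof. by case: M => [M0 M1]; rewrite /ascale /= !scalerN. Qed.

Lemma ascaleA m n c d (M : amx k m n) : ascale c (ascale d M) = ascale (c * d) M.
Proof. by case: M => [M0 M1]; rewrite /ascale /= !scalerA. Qed.

Lemma ascale1 m n (M : amx k m n) : ascale 1 M = M.
Proof. by case: M => [M0 M1]; rewrite /ascale /= !scale1r. Qed.

Lemma amx_thin m n (M N : amx k m n) : n = 0%N -> M = N.
Proof.
move=> n0; move: M N; rewrite n0 => -[M0 M1] [N0 N1].
by rewrite (thinmx0 M0) (thinmx0 M1) (thinmx0 N0) (thinmx0 N1).
Qed.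

Lemma amx_flat m n (M N : amx k m n) : m = 0%N -> M = N.
Proof.
move=> m0; move: M N; rewrite m0 => -[M0 M1] [N0 N1].
by rewrite (flatmx0 M0) (flatmx0 M1) (flatmx0 N0) (flatmx0 N1).
Qed.

Definition acol m1 m2 n (P : amx k m1 n) (Q : amx k m2 n) : amx k (m1 + m2) n :=
  (col_mx P.1 Q.1, col_mx P.2 Q.2).
Definition arow m n1 n2 (P : amx k m n1) (Q : amx k m n2) : amx k m (n1 + n2) :=
  (row_mx P.1 Q.1, row_mx P.2 Q.2).

Lemma amul_block m1 m2 n1 n2 p1 p2 (A : amx k m1 n1) (B : amx k m1 n2)
  (C : amx k m2 n1) (D : amx k m2 n2) (A' : amx k n1 p1) (B' : amx k n1 p2)
  (C' : amx k n2 p1) (D' : amx k n2 p2) :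
  amul (ablock A B C D) (ablock A' B' C' D') =
  ablock (amul A A' + amul B C') (amul A B' + amul B D')
         (amul C A' + amul D C') (amul C B' + amul D D').
Proof.
rewrite /amul /ablock /=; congr pair; first by rewrite mulmx_block.
by rewrite !mulmx_block add_block_mx /= !addrA; congr block_mx;
  rewrite -!addrA; congr (_ + _); rewrite addrCA.
Qed.

Lemma amul_block_col m1 m2 n1 n2 p (A : amx k m1 n1) (B : amx k m1 n2)
  (C : amx k m2 n1) (D : amx k m2 n2) (P : amx k n1 p) (Q : amx k n2 p) :
  amul (ablock A B C D) (acol P Q) = acol (amul A P + amul B Q) (amul C P + amul D Q).
Proof.
rewrite /amul /ablock /acol /=; congr pair; first by rewrite mul_block_col.
by rewrite !mul_block_col add_col_mx /= !addrA; congr col_mx;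
  rewrite -!addrA; congr (_ + _); rewrite addrCA.
Qed.

Lemma amul_row_block m n1 n2 p1 p2 (P : amx k m n1) (Q : amx k m n2)
  (A : amx k n1 p1) (B : amx k n1 p2) (C : amx k n2 p1) (D : amx k n2 p2) :
  amul (arow P Q) (ablock A B C D) = arow (amul P A + amul Q C) (amul P B + amul Q D).
Proof.
rewrite /amul /ablock /arow /=; congr pair; first by rewrite mul_row_block.
by rewrite !mul_row_block add_row_mx /= !addrA; congr row_mx;
  rewrite -!addrA; congr (_ + _); rewrite addrCA.
Qed.

Lemma amul_col m1 m2 n p (P : amx k m1 n) (Q : amx k m2 n) (R : amx k n p) :
  amul (acol P Q) R = acol (amul P R) (amul Q R).
Proof.
rewrite /amul /acol /=; congr pair; first by rewrite mul_col_mx.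
by rewrite !mul_col_mx add_col_mx.
Qed.

Lemma amul_row m n p1 p2 (R : amx k m n) (P : amx k n p1) (Q : amx k n p2) :
  amul R (arow P Q) = arow (amul R P) (amul R Q).
Proof.
rewrite /amul /arow /=; congr pair; first by rewrite mul_mx_row.
by rewrite !mul_mx_row add_row_mx.
Qed.

End AMatrices.

Section HomotopyCategory.
Variable k : fieldType.
Implicit Types X Y Z : cx k.

Lemma htpyE X Y (f g : chom X Y) : htpy f g <->
  exists h : forall n : int, amx k (rk Y n) (rk X (n + 1)), forall n,
    f (n + 1) - g (n + 1) = amul (h (n + 1)) (dif X (n + 1)) + amul (dif Y n) (h n).
Proof. by []. Qed.

Lemma htpy_eq X Y (f g : chom X Y) : (forall n, f n = g n) -> htpy f g.
Proof.
move=> fg; apply/htpyE; exists (fun n => 0) => n.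
by rewrite fg subrr amul0l amul0r addr0.
Qed.

Lemma htpy_sym X Y (f g : chom X Y) : htpy f g -> htpy g f.
Proof.
case/htpyE=> h H; apply/htpyE; exists (fun n => - h n) => n.
by rewrite amulNl amulNr -opprD -H opprB.
Qed.

Lemma htpy_trans X Y (f g e : chom X Y) : htpy f g -> htpy g e -> htpy f e.
Proof.
case/htpyE=> h H; case/htpyE=> h' H'; apply/htpyE.
exists (fun n => h n + h' n) => n.
by rewrite amulDl amulDr addrACA -H -H' addrA subrK.
Qed.

Lemma htpy_ext X Y (f f' g g' : chom X Y) :
  (forall n, f n = f' n) -> (forall n, g n = g' n) -> htpy f g -> htpy f' g'.
Proof.
move=> ff' gg' fg; apply: htpy_trans (htpy_trans fg (htpy_eq gg')).
by apply: htpy_eq => n; rewrite ff'.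
Qed.

Lemma htpy_compl X Y Z (f g : chom X Y) (c : chom Y Z) :
  is_chain c -> htpy f g -> htpy (hcomp c f) (hcomp c g).
Proof.
move=> cc /htpyE [h H]; apply/htpyE; exists (fun n => amul (c n) (h n)) => n.
by rewrite /hcomp [amul (dif Z n) _]amulA cc -!amulA -amulDr -H amulDr amulNr.
Qed.

Lemma htpy_compr X Y Z (f g : chom Y Z) (c : chom X Y) :
  is_chain c -> htpy f g -> htpy (hcomp f c) (hcomp g c).
Proof.
move=> cc /htpyE [h H]; apply/htpyE; exists (fun n => amul (h n) (c (n + 1))) => n.
by rewrite /hcomp -amulA -cc !amulA -amulDl -H amulDl amulNl.
Qed.

Lemma htpy_shift X Y (f g : chom X Y) : htpy f g -> htpy (shiftm f) (shiftm g).
Proof.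
case/htpyE=> h H; apply/htpyE; exists (fun n => - h (n + 1)) => n.
by rewrite /shiftm /= !amulNl !amulNr !opprK; apply: H.
Qed.

Lemma htpy_scale X Y c (f g : chom X Y) : htpy f g -> htpy (hscale c f) (hscale c g).
Proof.
case/htpyE=> h H; apply/htpyE; exists (fun n => ascale c (h n)) => n.
by rewrite /hscale amulZl amulZr -ascaleD -H ascaleD ascaleN.
Qed.

Lemma chain_comp X Y Z (f : chom Y Z) (g : chom X Y) :
  is_chain f -> is_chain g -> is_chain (hcomp f g).
Proof. by move=> cf cg n; rewrite /hcomp amulA cf -amulA cg amulA. Qed.

Lemma chain_shift X Y (f : chom X Y) : is_chain f -> is_chain (shiftm f).
Proof. by move=> cf n; rewrite /shiftm /= amulNl amulNr cf. Qed.

Lemma chain_scale X Y c (f : chom X Y) : is_chain f -> is_chain (hscale c f).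
Proof. by move=> cf n; rewrite /hscale amulZr amulZl cf. Qed.

Lemma chain_hid X : is_chain (hid X).
Proof. by move=> n; rewrite /hid amul1r amul1l. Qed.

Lemma iso_hid X : is_iso (hid X).
Proof.
split; first exact: chain_hid.
exists (hid X); split; first exact: chain_hid.
by split; apply: htpy_eq => n; rewrite /hcomp amul1l.
Qed.

Lemma hscale1 X Y (f : chom X Y) : hscale 1 f = f.
Proof. by apply: functional_extensionality_dep => n; apply: ascale1. Qed.

Lemma htpy_cancel_l X Y Z (a : chom Y Z) (a' : chom Z Y) (P Q : chom X Y) :
  is_chain P -> is_chain Q -> is_chain a' -> htpy (hcomp a' a) (hid Y) ->
  htpy (hcomp a P) (hcomp a Q) -> htpy P Q.
Proof.
move=> cP cQ ca' a'a aPQ.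
have PaaP : htpy P (hcomp a' (hcomp a P)).
  apply: htpy_ext (htpy_sym (htpy_compr cP a'a)) => n //.
  - by rewrite /hcomp /hid amul1l.
  - by rewrite /hcomp amulA.
have aaQQ : htpy (hcomp a' (hcomp a Q)) Q.
  apply: htpy_ext (htpy_compr cQ a'a) => n //.
  - by rewrite /hcomp amulA.
  - by rewrite /hcomp /hid amul1l.
exact: htpy_trans PaaP (htpy_trans (htpy_compl ca' aPQ) aaQQ).
Qed.

End HomotopyCategory.

Section TopDegree.
Variable k : fieldType.
Implicit Types X : cx k.

Definition has_top X (n : int) : Prop :=
  (rk X n != 0)%N /\ forall m : int, n < m -> rk X m = 0%N.

(* The top degree of X, chosen arbitrarily (0) when X has none. *)
Definition top_deg X : int := epsilon (inhabits 0) (has_top X).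

(* The shift index of X: the alpha with X_j[alpha] having X's top degree. *)
Definition shift_index X : int := - top_deg X - 1.

Lemma has_top_uniq X n m : has_top X n -> has_top X m -> n = m.
Proof.
move=> [Xn Xn'] [Xm Xm']; case: (ltgtP n m) => // nm.
  by move: Xm; rewrite Xn' // eqxx.
by move: Xn; rewrite Xm' // eqxx.
Qed.

Lemma top_degE X n : has_top X n -> top_deg X = n.
Proof.
move=> Xn; apply: (has_top_uniq _ Xn).
by apply: epsilon_spec; exists n.
Qed.

Lemma has_top_shift X n : has_top X n -> has_top (shift X) (n - 1).
Proof.
move=> [Xn Xn']; split => /=; first by rewrite subrK.
by move=> m nm; apply: Xn'; lia.
Qed.

Lemma shift_index_shift X n : has_top X n -> shift_index (shift X) = shift_index X + 1.
Proof.
move=> Xn; rewrite /shift_index (top_degE Xn) (top_degE (has_top_shift Xn)); lia.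
Qed.

Lemma has_top_Xobj (j : nat) (a : int) : (0 < j)%N -> has_top (Xobj k j a) (-1 - a).
Proof.
move=> j0; split => /=; rewrite /Xrk.
  by rewrite lexx andbT; case: ifP => //; lia.
by move=> m am; case: ifP => //; lia.
Qed.

Lemma shift_index_Xobj (j : nat) (a : int) : (0 < j)%N -> shift_index (Xobj k j a) = a.
Proof. by move=> j0; rewrite /shift_index (top_degE (has_top_Xobj a j0)); lia. Qed.

Lemma zero_or_top X : cx_ok X -> (forall n, rk X n = 0%N) \/ exists n, has_top X n.
Proof.
move=> [[N XN] _]; case: (classic (exists n, has_top X n)) => [|notop]; [by right|left].
have vanish (t : nat) (m : int) : N%:Z + 1 - t%:Z <= m -> rk X m = 0%N.
  elim: t m => [|t IH] m tm; first by apply: XN; lia.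
  have [|mt] := boolP (N%:Z + 1 - t%:Z <= m); first exact: IH.
  apply/eqP; apply: contraNT mt => Xm; exfalso; apply: notop.
  by exists m; split => // m' mm'; apply: IH; lia.
by move=> n; apply: (vanish (absz (N%:Z + 1 - n)%R)); lia.
Qed.

Lemma shift_index_shift_ok X :
  cx_ok X -> (forall n, rk X n = 0%N) \/ shift_index (shift X) = shift_index X + 1.
Proof.
case/zero_or_top => [|[n Xn]]; [by left|right].
exact: shift_index_shift Xn.
Qed.

End TopDegree.

Section Twist.
Variables (k : fieldType) (l : k) (w : cx k -> int).
Hypothesis l_neq0 : l != 0.
Implicit Types X Y Z : cx k.

Definition twist X Y (f : chom X Y) : chom X Y := hscale (l ^ (w Y - w X)) f.

Lemma twist_factorM X Y Z : l ^ (w Z - w X) = l ^ (w Z - w Y) * l ^ (w Y - w X).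
Proof. by rewrite -expfzDr // addrA subrK. Qed.

Lemma twist_factor_neq0 X Y : l ^ (w Y - w X) != 0.
Proof. exact: expfz_neq0. Qed.

(* Rescaling every Hom-space by a nonzero, multiplicative factor is a
   k-linear autoequivalence. *)
Lemma twist_klin_autoeq : @klin_autoeq k (fun X => X) twist.
Proof.
split; first by [].
split; first by move=> X Y f _ _; apply: chain_scale.
split; first by move=> X Y f g _ _ _ _; apply: htpy_scale.
split.
  move=> X Y Z f g _ _ _ _ _; apply: htpy_eq => n.
  by rewrite /twist /hscale /hcomp amulZl amulZr ascaleA (twist_factorM X Y Z).
split; first by move=> X _; apply: htpy_eq => n; rewrite /twist /hscale subrr ascale1.
split.
  move=> X Y c f g _ _ _ _; apply: htpy_eq => n.
  by rewrite /twist /hscale /hadd ascaleD !ascaleA mulrC.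
split.
  move=> X Y g _ _ cg; exists (hscale (l ^ (w Y - w X))^-1 g).
  split; first exact: chain_scale.
  apply: htpy_eq => n.
  by rewrite /twist /hscale ascaleA mulfV ?ascale1 // twist_factor_neq0.
split.
  move=> X Y f g _ _ _ _ /(htpy_scale (l ^ (w Y - w X))^-1).
  by apply: htpy_ext => n; rewrite /twist /hscale ascaleA mulVf ?ascale1 ?twist_factor_neq0.
by move=> Y okY; exists Y; split => //; exists (hid Y); apply: iso_hid.
Qed.

Definition twist_shift_eq : forall X : cx k, cx_ok X -> shift X = shift X :=
  fun X _ => erefl.

Lemma twist_shift_comm :
  (forall X, cx_ok X -> (forall n, rk X n = 0%N) \/ w (shift X) = w X + 1) ->
  @shift_comm k (fun X => X) twist twist_shift_eq.
Proof.
move=> w_shift X Y okX okY f _; apply: htpy_eq => n /=.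
rewrite /twist /hscale /shiftm /=.
case: (w_shift X okX) => [X0|->]; first by apply: amx_thin; rewrite X0.
case: (w_shift Y okY) => [Y0|->]; first by apply: amx_flat; rewrite Y0.
by rewrite opprD addrACA subrr addr0.
Qed.

End Twist.

Section Cone.
Variable k : fieldType.
Implicit Types X Y Z : cx k.

Lemma cone_inE X Y (f : chom X Y) n : cone_in f n = acol 0 (aid k _).
Proof. by rewrite /cone_in /acol /= col_mx0. Qed.

Lemma cone_outE X Y (f : chom X Y) n : cone_out f n = arow (aid k _) 0.
Proof. by rewrite /cone_out /arow /= row_mx0. Qed.

Lemma chain_cone_in X Y (f : chom X Y) : is_chain (cone_in f).
Proof.
move=> n; rewrite !cone_inE /= amul_block_col amul_col.
by rewrite !amul0l !amul0r amul1r amul1l !add0r.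
Qed.

Lemma chain_cone_out X Y (f : chom X Y) : is_chain (cone_out f).
Proof.
move=> n; rewrite !cone_outE /= amul_row_block amul_row.
by rewrite !amul0l !amul0r amul1r amul1l addr0 add0r.
Qed.

Lemma cone_ok X Y (f : chom X Y) : cx_ok X -> cx_ok Y -> is_chain f -> cx_ok (cone f).
Proof.
move=> [[NX X0] dX] [[NY Y0] dY] cf; split.
  by exists (NX + NY).+1 => n Nn /=; rewrite X0 ?Y0 //; lia.
move=> n /=; rewrite amul_block !amul0l !amul0r !amulNl !amulNr opprK.
rewrite (dX (n + 1)) (dY n) (cf (n + 1)) addNr !addr0.
by rewrite /ablock /= !block_mx0.
Qed.

Lemma dist_standard X Y (f : chom X Y) :
  cx_ok X -> cx_ok Y -> is_chain f -> dist f (cone_in f) (cone_out f).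
Proof.
move=> okX okY cf; do 3 (split; first by [|apply: chain_cone_in|apply: chain_cone_out]).
exists X, Y, f, (hid X), (hid Y), (hid (cone f)).
split; first by []; split; first by split; apply: iso_hid.
by split; apply: htpy_eq => n; rewrite /hcomp /shiftm /hid amul1l amul1r.
Qed.

(* Functoriality of the cone: a square b u ~ f a, made commutative by the
   homotopy h, induces a chain map C(u) -> C(f). *)
Definition cone_map X Y X' Y' (u : chom X Y) (f : chom X' Y') (a : chom X X')
  (b : chom Y Y') (h : forall n : int, amx k (rk Y' n) (rk X (n + 1))) :
  chom (cone u) (cone f) :=
  fun n => ablock (a (n + 1)) 0 (h n) (b n).

Section ConeMap.
Variables (X Y X' Y' : cx k) (u : chom X Y) (f : chom X' Y').
Variables (a : chom X X') (b : chom Y Y').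
Variable h : forall n : int, amx k (rk Y' n) (rk X (n + 1)).

Lemma chain_cone_map : is_chain a -> is_chain b ->
  (forall n, hcomp b u (n + 1) - hcomp f a (n + 1) =
             amul (h (n + 1)) (dif X (n + 1)) + amul (dif Y' n) (h n)) ->
  is_chain (cone_map u f a b h).
Proof.
move=> ca cb bufa n; rewrite /cone_map /= !amul_block !amul0l !amul0r !amulNl !amulNr.
rewrite (ca (n + 1)) (cb n) !addr0 !add0r; congr ablock.
move: (bufa n); rewrite /hcomp => /eqP; rewrite subr_eq => /eqP ->.
by rewrite !addrA addNr add0r addrC.
Qed.

Lemma cone_map_in n :
  hcomp (cone_map u f a b h) (cone_in u) n = hcomp (cone_in f) b n.
Proof.
rewrite /hcomp /cone_map !cone_inE amul_block_col amul_col.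
by rewrite !amul0l !amul0r amul1r amul1l addr0 !add0r.
Qed.

Lemma cone_map_out n :
  hcomp (cone_out f) (cone_map u f a b h) n = hcomp (shiftm a) (cone_out u) n.
Proof.
rewrite /hcomp /cone_map !cone_outE amul_row_block amul_row.
by rewrite !amul0l !amul0r amul1r amul1l addr0 !add0r.
Qed.

End ConeMap.

(* Every distinguished triangle on u receives a comparison map from the
   standard cone triangle of u (half of axiom TR3). *)
Lemma dist_cone_comparison X Y Z (u : chom X Y) (v : chom Y Z) (w : chom Z (shift X)) :
  dist u v w -> exists g : chom (cone u) Z,
    [/\ is_chain g, htpy (hcomp g (cone_in u)) v & htpy (hcomp w g) (cone_out u)].
Proof.
move=> [_ [cv [cw [X' [Y' [f [a [b [c [_ [[ia ib ic] [bufa cvb acw]]]]]]]]]]]].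
case: ia => ca [a' [ca' [a'a _]]]; case: ib => cb _.
case: ic => cc [c' [cc' [c'c cc'_id]]].
case/htpyE: bufa => h bufa.
have cphi := chain_cone_map ca cb bufa; set phi := cone_map u f a b h in cphi.
have cg : is_chain (hcomp c' phi) by apply: chain_comp.
exists (hcomp c' phi); split => //.
  have c'cv : htpy (hcomp c' (hcomp c v)) v.
    apply: htpy_ext (htpy_compr cv c'c) => n //.
    - by rewrite /hcomp amulA.
    - by rewrite /hcomp /hid amul1l.
  apply: htpy_trans c'cv; apply: htpy_ext (htpy_compl cc' (htpy_sym cvb)) => n //.
  by rewrite /hcomp -amulA; congr amul; apply: esym (cone_map_in u f a b h n).
have a'a_shift : htpy (hcomp (shiftm a') (shiftm a)) (hid (shift X)).
  exact: htpy_ext (htpy_shift a'a).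
apply: (htpy_cancel_l (chain_comp cw cg) (chain_cone_out u) (chain_shift ca') a'a_shift).
have out_c : htpy (hcomp (shiftm a) (hcomp w (hcomp c' phi)))
                  (hcomp (cone_out f) (hcomp c (hcomp c' phi))).
  by apply: htpy_ext (htpy_compr cg acw) => n; rewrite /hcomp !amulA.
apply: htpy_trans out_c _.
apply: htpy_ext (htpy_compl (chain_cone_out f) (htpy_compr cphi cc'_id)) => n.
- by rewrite /hcomp !amulA.
- by rewrite -(cone_map_out u f a b h n) /hcomp /hid amul1l.
Qed.

End Cone.

Section Counterexample.
Variable k : fieldType.
Implicit Types X Y : cx k.

Definition minimal X : Prop := forall n, (dif X n).1 = 0.

Lemma htpy_reduce X Y (f g : chom X Y) :
  minimal X -> minimal Y -> htpy f g -> forall n, (f n).1 = (g n).1.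
Proof.
move=> minX minY /htpyE [h fg] n; have := congr1 fst (fg (n - 1)).
rewrite /= minX minY mulmx0 mul0mx addr0 subrK => /eqP.
by rewrite subr_eq0 => /eqP.
Qed.

Definition X1 : cx k := Xobj k 1 0.
Definition U : chom X1 X1 := eps_gen k 1 1 0.

Lemma X1_ok : cx_ok X1.
Proof.
split; last by move=> n; rewrite /amul /= !mul0mx !mulmx0 addr0.
by exists 1%N => n n1 /=; rewrite /Xrk; case: ifP => // /andP [? ?]; lia.
Qed.

Lemma chain_U : is_chain U.
Proof.
move=> n; rewrite /amul /U /eps_gen /=.
by case: ifP => _; case: ifP => _ /=; rewrite !mul0mx !mulmx0 ?addr0.
Qed.

Lemma minimal_X1 : minimal X1. Proof. by []. Qed.

Lemma minimal_shift_X1 : minimal (shift X1). Proof. by move=> n; rewrite /= oppr0. Qed.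

Lemma minimal_cone_U : minimal (cone U).
Proof. by move=> n; rewrite /= /U /eps_gen; case: ifP => _; rewrite /= oppr0 block_mx0. Qed.

Lemma has_top_cone_U : has_top (cone U) (-1).
Proof.
split => //= m m1; rewrite /Xrk.
by case: ifP => [/andP [? ?]|_]; [lia | case: ifP => [/andP [? ?]|_] //; lia].
Qed.

Lemma row_mx1_0 (A : 'M[k]_(1, 0)) : (row_mx (1%:M : 'M[k]_1) A : 'M_(1, 1 + 0)) = 1%:M.
Proof.
apply/matrixP => i j; rewrite mxE; case: splitP => [j' Ej|[j' //]].
by rewrite !ord1 /=; congr (1%:M _ _); apply: val_inj => /=; rewrite Ej.
Qed.

Lemma const_mx11 : (const_mx 1 : 'M[k]_1) = 1%:M.
Proof. by apply/matrixP => i j; rewrite !ord1 !mxE. Qed.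

(* The eps-component of the differential C(eps)^-2 -> C(eps)^-1 is 1. *)
Lemma block_mx_eps (A : 'M[k]_(0, 1)) (B : 'M[k]_(0, 0)) (D : 'M[k]_(1, 0)) :
  (block_mx A B (const_mx 1) D : 'M_(0 + 1, 1 + 0)) = 1%:M.
Proof. by rewrite /block_mx col_flat_mx const_mx11 row_mx1_0. Qed.

(* For l <> 1 the standard triangle of eps, with its third map rescaled by l,
   is not distinguished: a comparison endomorphism g of C(eps) would be the
   identity modulo eps in degree -1, l^-1 in degree -2, and the chain
   condition through the eps-component of the differential forces these to agree. *)
Lemma rescaled_cone_not_dist (l : k) : l != 1 ->
  ~ dist U (cone_in U) (hscale l (cone_out U)).
Proof.
move=> l_neq1 /dist_cone_comparison [g [cg g_in out_g]].
have g_top : (g (-1)).1 = 1%:M.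
  have := htpy_reduce minimal_X1 minimal_cone_U g_in (-1).
  by rewrite /hcomp /amul /= col_flat_mx mulmx1.
have g_bot : l *: (g (-2)).1 = 1%:M.
  have := htpy_reduce minimal_cone_U minimal_shift_X1 out_g (-2).
  by rewrite /hcomp /amul /hscale /ascale /= row_mx1_0 -scalemxAl mul1mx.
have g_diff : (g (-1)).1 = (g (-2)).1.
  have := congr1 snd (cg (-2)).
  rewrite /amul /= oppr0 block_mx0 mul0mx add0r mulmx0 addr0.
  by rewrite block_mx_eps mul1mx mulmx1 => ->.
move/eqP: l_neq1; apply; move/matrixP/(_ ord0 ord0): g_bot.
by rewrite -g_diff g_top !mxE mulr1.
Qed.

End Counterexample.

Section LambdaTwist.
Variables (k : fieldType) (l : k).

Definition lambda_twist := twist l (@shift_index k).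

Lemma lambda_twist_spec : @lambda_spec k l (fun X => X) lambda_twist.
Proof.
exists (fun i a _ => erefl); split; last split.
- move=> i j a hi hj _ _; apply: htpy_eq => n.
  by rewrite /castm /lambda_twist /twist (shift_index_Xobj k a hj) (shift_index_Xobj k 0 hi) subr0.
- move=> i j a hi hj _ _; apply: htpy_eq => n.
  by rewrite /castm /lambda_twist /twist (shift_index_Xobj k a hj) (shift_index_Xobj k 0 hi) subr0.
- by move=> i hi f _; apply: htpy_eq => n; rewrite /castm /lambda_twist /twist /hscale subrr ascale1.
Qed.

(* It commutes with [1], the shift index rising by one on nonzero complexes. *)
Lemma lambda_twist_shift_comm :
  @shift_comm k (fun X => X) lambda_twist (@twist_shift_eq k).
Proof. exact: twist_shift_comm (@shift_index_shift_ok k). Qed.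

(* The twist sends the standard triangle of eps to the same triangle with its
   third map multiplied by l, since X_1, C(eps) and X_1[1] have shift indices
   0, 0 and 1. *)
Lemma lambda_twist_not_exact : l != 1 ->
  ~ @exact k (fun X => X) lambda_twist (@twist_shift_eq k).
Proof.
move=> l_neq1 twist_exact.
have okX1 := X1_ok k; have cU := chain_U k.
have := twist_exact _ _ _ okX1 okX1 (cone_ok okX1 okX1 cU) _ _ _ (dist_standard okX1 okX1 cU).
have ind_X1 : shift_index (X1 k) = 0 by apply: shift_index_Xobj.
have ind_C : shift_index (cone (U k)) = 0.
  by rewrite /shift_index (top_degE (has_top_cone_U k)).
have ind_sX1 : shift_index (shift (X1 k)) = 1.
  by rewrite (shift_index_shift (has_top_Xobj k 0 (isT : (0 < 1)%N))) ind_X1.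
rewrite /castm /lambda_twist /twist ind_X1 ind_C ind_sX1 subr0 expr0z expr1z !hscale1.
exact: rescaled_cone_not_dist.
Qed.

End LambdaTwist.

Unset Implicit Arguments.
Set Strict Implicit.

Theorem corollary5p13 (k : fieldType) (hk : exists l : k, l != 0 /\ l != 1) :
  (exists (F0 : cx k -> cx k) (F1 : forall X Y : cx k, chom X Y -> chom (F0 X) (F0 Y))
          (hsh : forall X, cx_ok X -> F0 (shift X) = shift (F0 X)),
      klin_autoeq F1 /\ shift_comm F1 hsh /\ ~ exact F1 hsh)
  /\
  (forall l : k, l != 0 -> l != 1 ->
    exists (F0 : cx k -> cx k) (F1 : forall X Y : cx k, chom X Y -> chom (F0 X) (F0 Y))
           (hsh : forall X, cx_ok X -> F0 (shift X) = shift (F0 X)),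
      [/\ lambda_spec l F1, klin_autoeq F1, shift_comm F1 hsh & ~ exact F1 hsh]).
Proof.
have explicit (l : k) : l != 0 -> l != 1 ->
    exists (F0 : cx k -> cx k) (F1 : forall X Y : cx k, chom X Y -> chom (F0 X) (F0 Y))
           (hsh : forall X, cx_ok X -> F0 (shift X) = shift (F0 X)),
      [/\ lambda_spec l F1, klin_autoeq F1, shift_comm F1 hsh & ~ exact F1 hsh].
  move=> l_neq0 l_neq1; exists (fun X => X), (lambda_twist l), (@twist_shift_eq k).
  split; [exact: lambda_twist_spec | exact: twist_klin_autoeq
         | exact: lambda_twist_shift_comm | exact: lambda_twist_not_exact].
split => //; case: hk => l [l_neq0 l_neq1].
have [F0 [F1 [hsh [_ autoeq comm not_exact]]]] := explicit l l_neq0 l_neq1.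
by exists F0, F1, hsh.
Qed.
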